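(* (i) $\overline{H_{par}}$ is an $H$-$H_{par}$-bimodule via $$h\triangleright\Big(\sum_i h_i\triangleright\varphi(x_i)\Big)\triangleleft y=\sum_i hh_i\triangleright\varphi(x_iy),$$ for $h,h_i\in H$ and $x_i,y\in H_{par}$. (ii) Let $M$ be a partial $H$-module, regarded as a left $H_{par}$-module. Equip $\overline{H_{par}}\otimes_{H_{par}}M$ with the left $H$-module structure coming from (i), and define $$T:\overline{H_{par}}\otimes_{H_{par}}M\to\overline{H_{par}}\otimes_{H_{par}}M,\quad T(f\otimes m)=\varphi(1)\otimes f(1_H)m,$$ $$\phi:M\to\overline{H_{par}}\otimes_{H_{par}}M,\quad \phi(m)=\varphi(1)\otimes m.$$ Here $1$ is the unit of $H_{par}$ and $f(1_H)\in H_{par}$ acts on $m$. Then $((\overline{H_{par}}\otimes_{H_{par}}M,T),\phi)$ is a proper dilation of $M$ (called the secondary dilation of $M$).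
   Context: Throughout, $k$ is a field and $H$ is a Hopf algebra over $k$ with bijective antipode $S$ and Sweedler notation $\Delta(h)=h_{(1)}\otimes h_{(2)}$. A partial $H$-module is a vector space $M$ with linear $\pi:H\to\mathrm{End}_k(M)$ satisfying, for all $h,k\in H$: - $\pi(1_H)=\mathrm{id}$; - $\pi(h)\pi(k_{(1)})\pi(S(k_{(2)}))=\pi(hk_{(1)})\pi(S(k_{(2)}))$; - $\pi(h_{(1)})\pi(S(h_{(2)}))\pi(k)=\pi(h_{(1)})\pi(S(h_{(2)})k)$; - $\pi(h)\pi(S(k_{(1)}))\pi(k_{(2)})=\pi(hS(k_{(1)}))\pi(k_{(2)})$; - $\pi(S(h_{(1)}))\pi(h_{(2)})\pi(k)=\pi(S(h_{(1)}))\pi(h_{(2)}k)$. The algebra $H_{par}$ is the quotient of the tensor algebra $T(H)$ (writing $[h]$ for the image of $h$) by the ideal generated by, for all $h,k\in H$: - $[1_H]-1$; - $[h][k_{(1)}][S(k_{(2)})]-[hk_{(1)}][S(k_{(2)})]$; - $[h_{(1)}][S(h_{(2)})][k]-[h_{(1)}][S(h_{(2)})k]$; - $[h][S(k_{(1)})][k_{(2)}]-[hS(k_{(1)})][k_{(2)}]$; - $[S(h_{(1)})][h_{(2)}][k]-[S(h_{(1)})][h_{(2)}k]$. Partial $H$-modules are identified with left $H_{par}$-modules via $[h]m=\pi(h)(m)$. In particular, $H_{par}$ is a partial $H$-module via $\pi(h)(x)=[h]x$. For a left $H$-module $N$ and a linear projection $T$, put $T_h(x)=h_{(1)}\triangleright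 T(S(h_{(2)})\triangleright x)$. $T$ satisfies the c-condition if $T_h\circ T=T\circ T_h$ for all $h$; then $T(N)$ is a partial $H$-module via $\pi_T(h)(x)=T(h\triangleright x)$. A dilation of a partial module $M$ is $((N,T),\theta)$ with $N$ a left $H$-module, $T$ a projection satisfying the c-condition, and $\theta:M\to T(N)$ an isomorphism of partial $H$-modules onto $(T(N),\pi_T)$. It is proper if $N$ is generated as an $H$-module by $T(N)$. Standard dilation of a partial module $(P,\rho)$: $\operatorname{Hom}_k(H,P)$ is a left $H$-module via $(h\triangleright f)(k)=f(kh)$, $\varphi(p)(h)=\rho(h)(p)$, $\overline P=H\triangleright\varphi(P)$. Thus $\overline{H_{par}}=H\triangleright\varphi(H_{par})\subseteq\operatorname{Hom}_k(H,H_{par})$ with $\varphi(x)(h)=[h]x$. *)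

From HB Require Import structures.
From mathcomp Require Import all_boot all_order all_algebra.
Set Implicit Arguments. Unset Strict Implicit. Unset Printing Implicit Defensive.
Import GRing.Theory.
Local Open Scope ring_scope.

Section PartialHopf.
Variable k : fieldType.
Variable H : algType k.

Definition klinear (V W : lmodType k) (f : V -> W) : Prop :=
  forall (a : k) (u v : V), f (a *: u + v) = a *: f u + f v.

Definition lin_fun (f : H -> k) : Prop :=
  forall (a : k) (u v : H), f (a *: u + v) = a * f u + f v.

(* Elements of H (x) H are represented by finite lists of pairs
   sum_i a_i (x) b_i ; two representations denote the same tensor iff all
   pairs of linear functionals agree on them (H (x) H is separated by
   H^* (x) H^* over a field). *)
Definition teq2 (s t : seq (H * H)) : Prop :=
  forall f g : H -> k, lin_fun f -> lin_fun g ->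
    \sum_(p <- s) f p.1 * g p.2 = \sum_(p <- t) f p.1 * g p.2.

(* Hopf algebra with coproduct cop (Sweedler: cop h = h_(1) (x) h_(2)),
   counit eps and bijective antipode S. *)
Definition is_hopf (cop : H -> seq (H * H)) (eps : H -> k) (S : H -> H) : Prop :=
  (forall (a : k) (u v : H),
      teq2 (cop (a *: u + v)) ([seq (a *: p.1, p.2) | p <- cop u] ++ cop v)) /\
  (forall (u : H) (f g l : H -> k), lin_fun f -> lin_fun g -> lin_fun l ->
      \sum_(p <- cop u) \sum_(q <- cop p.1) f q.1 * g q.2 * l p.2 =
      \sum_(p <- cop u) \sum_(q <- cop p.2) f p.1 * g q.1 * l q.2) /\
  (forall u v : H,
      teq2 (cop (u * v)) [seq (p.1 * q.1, p.2 * q.2) | p <- cop u, q <- cop v]) /\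
  teq2 (cop 1) [:: (1, 1)] /\
  lin_fun eps /\ (forall u v : H, eps (u * v) = eps u * eps v) /\ eps 1 = 1 /\
  (forall u : H, \sum_(p <- cop u) eps p.1 *: p.2 = u) /\
  (forall u : H, \sum_(p <- cop u) eps p.2 *: p.1 = u) /\
  (forall (a : k) (u v : H), S (a *: u + v) = a *: S u + S v) /\
  (forall u : H, \sum_(p <- cop u) S p.1 * p.2 = eps u *: 1) /\
  (forall u : H, \sum_(p <- cop u) p.1 * S p.2 = eps u *: 1) /\
  bijective S.

Variable cop : H -> seq (H * H).
Variable S : H -> H.

Definition par_rel (B : algType k) (p : H -> B) : Prop :=
  (forall (a : k) (u v : H), p (a *: u + v) = a *: p u + p v) /\
  p 1 = 1 /\
  (forall h l : H, \sum_(q <- cop l) p h * p q.1 * p (S q.2)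
                 = \sum_(q <- cop l) p (h * q.1) * p (S q.2)) /\
  (forall h l : H, \sum_(q <- cop h) p q.1 * p (S q.2) * p l
                 = \sum_(q <- cop h) p q.1 * p (S q.2 * l)) /\
  (forall h l : H, \sum_(q <- cop l) p h * p (S q.1) * p q.2
                 = \sum_(q <- cop l) p (h * S q.1) * p q.2) /\
  (forall h l : H, \sum_(q <- cop h) p (S q.1) * p q.2 * p l
                 = \sum_(q <- cop h) p (S q.1) * p (q.2 * l)).

Definition is_alg_mor (A B : algType k) (g : A -> B) : Prop :=
  (forall (a : k) (x y : A), g (a *: x + y) = a *: g x + g y) /\
  (forall x y : A, g (x * y) = g x * g y) /\ g 1 = 1.

(* (A, br) is H_par = T(H)/I with br h = [h]: characterised (up to unique
   isomorphism) as the quotient of the tensor algebra by the ideal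
   generated by the relations: the relations hold, A is generated by the
   [h], and every algebra with a map satisfying the relations receives an
   algebra map from A. *)
Definition is_Hpar (A : algType k) (br : H -> A) : Prop :=
  par_rel br /\
  (forall x : A, exists s : seq (k * seq H),
      x = \sum_(q <- s) q.1 *: \prod_(h <- q.2) br h) /\
  (forall (B : algType k) (p : H -> B), par_rel p ->
      exists g : A -> B, is_alg_mor g /\ forall h, g (br h) = p h).

Definition is_partial_module (M : lmodType k) (pi : H -> M -> M) : Prop :=
  (forall (a : k) (u v : H) (m : M), pi (a *: u + v) m = a *: pi u m + pi v m) /\
  (forall h, klinear (pi h)) /\
  (forall m, pi 1 m = m) /\
  (forall (h l : H) (m : M), \sum_(q <- cop l) pi h (pi q.1 (pi (S q.2) m))
                           = \sum_(q <- cop l) pi (h * q.1) (pi (S q.2) m)) /\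
  (forall (h l : H) (m : M), \sum_(q <- cop h) pi q.1 (pi (S q.2) (pi l m))
                           = \sum_(q <- cop h) pi q.1 (pi (S q.2 * l) m)) /\
  (forall (h l : H) (m : M), \sum_(q <- cop l) pi h (pi (S q.1) (pi q.2 m))
                           = \sum_(q <- cop l) pi (h * S q.1) (pi q.2 m)) /\
  (forall (h l : H) (m : M), \sum_(q <- cop h) pi (S q.1) (pi q.2 (pi l m))
                           = \sum_(q <- cop h) pi (S q.1) (pi (q.2 * l) m)).

Definition is_Amodule (A : algType k) (M : lmodType k) (rho : A -> M -> M) : Prop :=
  (forall (a : k) (x y : A) (m : M), rho (a *: x + y) m = a *: rho x m + rho y m) /\
  (forall x, klinear (rho x)) /\
  (forall m, rho 1 m = m) /\
  (forall (x y : A) (m : M), rho (x * y) m = rho x (rho y m)).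

Definition is_Hmodule (N : lmodType k) (act : H -> N -> N) : Prop :=
  (forall (a : k) (u v : H) (n : N), act (a *: u + v) n = a *: act u n + act v n) /\
  (forall h, klinear (act h)) /\
  (forall n, act 1 n = n) /\
  (forall (h l : H) (n : N), act (h * l) n = act h (act l n)).

Definition Tpart (N : lmodType k) (act : H -> N -> N) (T : N -> N) (h : H) (x : N) : N :=
  \sum_(q <- cop h) act q.1 (T (act (S q.2) x)).

Definition is_projection (N : lmodType k) (T : N -> N) : Prop :=
  klinear T /\ forall x, T (T x) = T x.

Definition c_condition (N : lmodType k) (act : H -> N -> N) (T : N -> N) : Prop :=
  forall (h : H) (x : N), Tpart act T h (T x) = T (Tpart act T h x).

Definition is_dilation (M : lmodType k) (pi : H -> M -> M)
    (N : lmodType k) (act : H -> N -> N) (T : N -> N) (theta : M -> N) : Prop :=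
  is_Hmodule act /\ is_projection T /\ c_condition act T /\
  klinear theta /\ injective theta /\
  (forall m, T (theta m) = theta m) /\
  (forall x, T x = x -> exists m, theta m = x) /\
  (forall (h : H) (m : M), theta (pi h m) = T (act h (theta m))).

Definition is_proper (N : lmodType k) (act : H -> N -> N) (T : N -> N) : Prop :=
  forall n : N, exists s : seq (H * N), n = \sum_(p <- s) act p.1 (T p.2).

(* The standard dilation of H_par inside Hom_k(H, H_par) *)
Section Hbar.
Variable A : algType k.
Variable br : H -> A.

Definition phi (x : A) : H -> A := fun h => br h * x.
Definition hact (h : H) (f : H -> A) : H -> A := fun l => f (l * h).
Definition fadd (f g : H -> A) : H -> A := fun l => f l + g l.
Definition fscale (a : k) (f : H -> A) : H -> A := fun l => a *: f l.

Definition hbar_of (s : seq (H * A)) : H -> A :=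
  fun l => \sum_(p <- s) hact p.1 (phi p.2) l.

Definition in_Hbar (f : H -> A) : Prop := exists s, f = hbar_of s.

Definition ract_formula (ract : (H -> A) -> A -> (H -> A)) : Prop :=
  forall (h : H) (s : seq (H * A)) (y : A),
    ract (hact h (hbar_of s)) y = hbar_of [seq (h * p.1, p.2 * y) | p <- s].

Definition is_bimodule (ract : (H -> A) -> A -> (H -> A)) : Prop :=
  (forall f g a, in_Hbar f -> in_Hbar g -> in_Hbar (fadd (fscale a f) g)) /\
  (forall f h, in_Hbar f -> in_Hbar (hact h f)) /\
  (forall f y, in_Hbar f -> in_Hbar (ract f y)) /\
  (forall f (a : k) u v, in_Hbar f ->
      hact (a *: u + v) f = fadd (fscale a (hact u f)) (hact v f)) /\
  (forall f g (a : k) h, in_Hbar f -> in_Hbar g ->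
      hact h (fadd (fscale a f) g) = fadd (fscale a (hact h f)) (hact h g)) /\
  (forall f, in_Hbar f -> hact 1 f = f) /\
  (forall f h l, in_Hbar f -> hact (h * l) f = hact h (hact l f)) /\
  (forall f (a : k) x y, in_Hbar f ->
      ract f (a *: x + y) = fadd (fscale a (ract f x)) (ract f y)) /\
  (forall f g (a : k) y, in_Hbar f -> in_Hbar g ->
      ract (fadd (fscale a f) g) y = fadd (fscale a (ract f y)) (ract g y)) /\
  (forall f, in_Hbar f -> ract f 1 = f) /\
  (forall f x y, in_Hbar f -> ract (ract f x) y = ract f (x * y)) /\
  (forall f h y, in_Hbar f -> hact h (ract f y) = ract (hact h f) y).

Variable ract : (H -> A) -> A -> (H -> A).
Variable M : lmodType k.
Variable rho : A -> M -> M.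

Definition balanced (W : lmodType k) (beta : (H -> A) -> M -> W) : Prop :=
  forall (f g : H -> A), in_Hbar f -> in_Hbar g -> forall (a : k) (m n : M) (y : A),
    beta (fadd (fscale a f) g) m = a *: beta f m + beta g m /\
    beta f (a *: m + n) = a *: beta f m + beta f n /\
    beta (ract f y) m = beta f (rho y m).

(* (X, tp) is the tensor product \overline{H_par} (x)_{H_par} M, with
   tp f m = f (x) m (characterised by its universal property). *)
Definition is_tensor (X : lmodType k) (tp : (H -> A) -> M -> X) : Prop :=
  balanced tp /\
  (forall x : X, exists s : seq (seq (H * A) * M),
      x = \sum_(p <- s) tp (hbar_of p.1) p.2) /\
  (forall (W : lmodType k) (beta : (H -> A) -> M -> W), balanced beta ->
      exists L : X -> W, klinear L /\
        forall f m, in_Hbar f -> L (tp f m) = beta f m).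

End Hbar.
End PartialHopf.

(** The right action of [H_par] on [\overline{H_par}] is pointwise right
    multiplication.  Hence [\overline{H_par} (x) M] is spanned by the elements
    [gen h m = (h |> phi(1)) (x) m], on which [h'] acts by [gen (h' h) m] and
    [T] by [T (gen h m) = theta ([h] m)], where [theta m = phi(1) (x) m].  So
    [T = theta o eval1] with [eval1 (f (x) m) = f(1) m] a left inverse of
    [theta]; this gives idempotence of [T], injectivity of [theta] and
    [T(X) = theta(M)], and properness is [gen h m = h |> T (gen 1 m)].  On
    [gen h0 m] both sides of the c-condition become [theta] of
    [[h_(1)][S h_(2)][h0] m], once by the relation
    [[l][h_(1)][S h_(2)] = [l h_(1)][S h_(2)]] and once by
    [[h_(1)][S h_(2)][h0] = [h_(1)][S h_(2) h0]] of [H_par]. *)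
From HB Require Import structures.
From mathcomp Require Import all_boot all_order all_algebra.
From Stdlib Require Import FunctionalExtensionality IndefiniteDescription.
Import GRing.Theory.
Local Open Scope ring_scope.
Set Implicit Arguments. Unset Strict Implicit.

Section KLinear.
Variables (k : fieldType) (U V W : lmodType k).

Lemma klinear0 (F : V -> W) : klinear F -> F 0 = 0.
Proof. by move=> hF; have := hF (-1) 0 0; rewrite scaler0 addr0 scaleN1r addNr. Qed.

Lemma klinearD (F : V -> W) u v : klinear F -> F (u + v) = F u + F v.
Proof. by move=> hF; have := hF 1 u v; rewrite !scale1r. Qed.

Lemma klinear_sum (F : V -> W) (I : Type) (r : seq I) (G : I -> V) :
  klinear F -> F (\sum_(i <- r) G i) = \sum_(i <- r) F (G i).
Proof.
move=> hF; elim: r => [|i r IH]; first by rewrite !big_nil klinear0.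
by rewrite !big_cons klinearD // IH.
Qed.

Lemma klinear_comp (F : V -> W) (G : U -> V) :
  klinear F -> klinear G -> klinear (fun x => F (G x)).
Proof. by move=> hF hG a u v; rewrite hG hF. Qed.

Lemma klinear_scaleD (F G : V -> W) (a : k) :
  klinear F -> klinear G -> klinear (fun x => a *: F x + G x).
Proof. by move=> hF hG b u v; rewrite hF hG !scalerDr !scalerA mulrC addrACA. Qed.

Lemma klinear_sumf (I : Type) (r : seq I) (F : I -> V -> W) :
  (forall i, klinear (F i)) -> klinear (fun x => \sum_(i <- r) F i x).
Proof.
move=> hF b u v; elim: r => [|i r IH]; first by rewrite !big_nil scaler0 addr0.
by rewrite !big_cons hF IH scalerDr addrACA.
Qed.

End KLinear.

Section Hbar.
Variables (k : fieldType) (H : algType k) (A : algType k) (br : H -> A).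

Definition rmul_fun (f : H -> A) (y : A) : H -> A := fun l => f l * y.

Lemma hact_hbar_of h s :
  hact h (hbar_of br s) = hbar_of br [seq (h * p.1, p.2) | p <- s].
Proof.
apply: functional_extensionality => l; rewrite /hbar_of big_map.
by apply: eq_bigr => p _; rewrite /hact /phi /= mulrA.
Qed.

Lemma rmul_hbar_of s y :
  rmul_fun (hbar_of br s) y = hbar_of br [seq (p.1, p.2 * y) | p <- s].
Proof.
apply: functional_extensionality => l; rewrite /rmul_fun /hbar_of big_map mulr_suml.
by apply: eq_bigr => p _; rewrite /hact /phi /= mulrA.
Qed.

Lemma hact1 (f : H -> A) : hact 1 f = f.
Proof. by apply: functional_extensionality => l; rewrite /hact mulr1. Qed.

Lemma hactM h l (f : H -> A) : hact (h * l) f = hact h (hact l f).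
Proof. by apply: functional_extensionality => x; rewrite /hact mulrA. Qed.

Lemma phi_hbar_of x : phi br x = hbar_of br [:: (1, x)].
Proof.
by apply: functional_extensionality => l; rewrite /hbar_of big_seq1 /hact mulr1.
Qed.

Lemma in_Hbar_hbar_of s : in_Hbar br (hbar_of br s).
Proof. by exists s. Qed.

Lemma in_Hbar_hact h f : in_Hbar br f -> in_Hbar br (hact h f).
Proof. by case=> s ->; rewrite hact_hbar_of; apply: in_Hbar_hbar_of. Qed.

Lemma in_Hbar_phi x : in_Hbar br (phi br x).
Proof. by rewrite phi_hbar_of; apply: in_Hbar_hbar_of. Qed.

Lemma in_Hbar_hact_phi h x : in_Hbar br (hact h (phi br x)).
Proof. exact/in_Hbar_hact/in_Hbar_phi. Qed.

Lemma in_Hbar_rmul f y : in_Hbar br f -> in_Hbar br (rmul_fun f y).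
Proof. by case=> s ->; rewrite rmul_hbar_of; apply: in_Hbar_hbar_of. Qed.

Lemma in_Hbar_scaleD f g (a : k) : in_Hbar br f -> in_Hbar br g ->
  in_Hbar br (fadd (fscale a f) g).
Proof.
case=> s -> [t ->]; exists ([seq (p.1, a *: p.2) | p <- s] ++ t).
apply: functional_extensionality => l.
rewrite /fadd /fscale /hbar_of big_cat big_map scaler_sumr.
by congr (_ + _); apply: eq_bigr => p _; rewrite /hact /phi /= scalerAr.
Qed.

Lemma hbar_of_cons p s :
  hbar_of br (p :: s) = fadd (fscale 1 (hact p.1 (phi br p.2))) (hbar_of br s).
Proof.
by apply: functional_extensionality => l; rewrite /fadd /fscale /hbar_of big_cons scale1r.
Qed.

Lemma hact_phi1 h : hact h (phi br 1) 1 = br h.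
Proof. by rewrite /hact /phi mul1r mulr1. Qed.

Hypothesis br_linear : forall (a : k) u v, br (a *: u + v) = a *: br u + br v.

Lemma hact_scaleDl f (a : k) u v : in_Hbar br f ->
  hact (a *: u + v) f = fadd (fscale a (hact u f)) (hact v f).
Proof.
case=> s ->; apply: functional_extensionality => l.
rewrite /fadd /fscale /hact /hbar_of scaler_sumr -big_split.
apply: eq_bigr => p _; rewrite /hact /phi /=.
by rewrite mulrDr mulrDl -scalerAr -scalerAl br_linear mulrDl scalerAl.
Qed.

Lemma rmul_formula : ract_formula br rmul_fun.
Proof. by move=> h s y; rewrite hact_hbar_of rmul_hbar_of -map_comp. Qed.

Lemma rmul_bimodule : is_bimodule br rmul_fun.
Proof.
do !split.
- by move=> f g a; apply: in_Hbar_scaleD.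
- by move=> f h; apply: in_Hbar_hact.
- by move=> f y; apply: in_Hbar_rmul.
- by move=> f a u v; apply: hact_scaleDl.
- by move=> f _; apply: hact1.
- by move=> f h l _; apply: hactM.
- by move=> f a x y _; apply: functional_extensionality => l; rewrite /rmul_fun /fadd /fscale mulrDr scalerAr.
- by move=> f g a y _ _; apply: functional_extensionality => l; rewrite /rmul_fun /fadd /fscale mulrDl scalerAl.
- by move=> f _; apply: functional_extensionality => l; rewrite /rmul_fun mulr1.
- by move=> f x y _; apply: functional_extensionality => l; rewrite /rmul_fun mulrA.
Qed.

End Hbar.

Section Tensor.
Variables (k : fieldType) (H : algType k) (A : algType k) (br : H -> A).
Variables (M : lmodType k) (rho : A -> M -> M).
Hypothesis rho_module : is_Amodule rho.
Variable ract : (H -> A) -> A -> (H -> A).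
Hypothesis ract_rmul : ract_formula br ract.
Variables (X : lmodType k) (tp : (H -> A) -> M -> X).
Hypothesis tp_tensor : is_tensor br ract rho tp.

Lemma rho_linearl m : klinear (fun x => rho x m).
Proof. by case: rho_module => hl _ a x y; apply: hl. Qed.

Lemma rho_linear x : klinear (rho x).
Proof. by case: rho_module => _ []. Qed.

Lemma rho1 m : rho 1 m = m.
Proof. by case: rho_module => _ [_ []]. Qed.

Lemma rhoM x y m : rho (x * y) m = rho x (rho y m).
Proof. by case: rho_module => _ [_ [_ ->]]. Qed.

Lemma ractE f y : in_Hbar br f -> ract f y = rmul_fun f y.
Proof. by case=> s ->; rewrite -[hbar_of br s]hact1 ract_rmul rmul_formula. Qed.

Lemma tp_scaleDl f g a m : in_Hbar br f -> in_Hbar br g ->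
  tp (fadd (fscale a f) g) m = a *: tp f m + tp g m.
Proof. by move=> hf hg; case: (tp_tensor.1 f g hf hg a m m 1). Qed.

Lemma tp_linear f : in_Hbar br f -> klinear (tp f).
Proof. by move=> hf a u v; case: (tp_tensor.1 f f hf hf a u v 1) => _ []. Qed.

Lemma tp_rmul f y m : in_Hbar br f -> tp (rmul_fun f y) m = tp f (rho y m).
Proof. by move=> hf; rewrite -ractE //; case: (tp_tensor.1 f f hf hf 1 m m y) => _ []. Qed.

Lemma tensor_lift (W : lmodType k) (beta : (H -> A) -> M -> W) :
  balanced br ract rho beta ->
  {L : X -> W | klinear L /\ forall f m, in_Hbar br f -> L (tp f m) = beta f m}.
Proof. by move=> hbeta; apply/constructive_indefinite_description/tp_tensor.2.2. Qed.

Definition gen (h : H) (m : M) : X := tp (hact h (phi br 1)) m.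

Definition theta (m : M) : X := tp (phi br 1) m.

Lemma gen1 : gen 1 =1 theta.
Proof. by move=> m; rewrite /gen hact1. Qed.

Lemma tp_hact_phi h y m : tp (hact h (phi br y)) m = gen h (rho y m).
Proof.
rewrite /gen -tp_rmul; last exact: in_Hbar_hact_phi.
by congr tp; apply: functional_extensionality => l; rewrite /rmul_fun /hact /phi mulr1.
Qed.

Lemma tp_hbar_of s m : tp (hbar_of br s) m = \sum_(p <- s) gen p.1 (rho p.2 m).
Proof.
elim: s => [|p s IH].
  (* [tp] is only known to be additive on [fadd]/[fscale] combinations. *)
  have -> : hbar_of br [::] = fadd (fscale (-1) (phi br 0)) (phi br 0).
    apply: functional_extensionality => l.
    by rewrite /hbar_of big_nil /fadd /fscale /phi mulr0 scaler0 addr0.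
  by rewrite big_nil tp_scaleDl ?scaleN1r ?addNr //; apply: in_Hbar_phi.
rewrite (hbar_of_cons br) tp_scaleDl ?scale1r ?big_cons ?IH ?tp_hact_phi //.
- exact: in_Hbar_hact_phi.
- exact: in_Hbar_hbar_of.
Qed.

Lemma gen_span x : exists r : seq (H * M), x = \sum_(p <- r) gen p.1 p.2.
Proof.
have [s ->] := tp_tensor.2.1 x.
elim: s => [|p s [r IH]]; first by exists [::]; rewrite !big_nil.
exists ([seq (q.1, rho q.2 p.2) | q <- p.1] ++ r).
by rewrite big_cat big_map big_cons tp_hbar_of IH.
Qed.

Lemma klinear_eq_on_gen (W : lmodType k) (F G : X -> W) :
  klinear F -> klinear G -> (forall h m, F (gen h m) = G (gen h m)) -> F =1 G.
Proof.
move=> hF hG eFG x; have [r ->] := gen_span x.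
by rewrite !klinear_sum //; apply: eq_bigr => p _; apply: eFG.
Qed.

Lemma theta_linear : klinear theta.
Proof. exact/tp_linear/in_Hbar_phi. Qed.

Lemma balanced_hact h : balanced br ract rho (fun f m => tp (hact h f) m).
Proof.
move=> f g hf hg a m n y; split; [|split].
- exact: tp_scaleDl (in_Hbar_hact h hf) (in_Hbar_hact h hg).
- exact: (tp_linear (in_Hbar_hact h hf)).
- by rewrite ractE // -tp_rmul //; apply: in_Hbar_hact.
Qed.

Lemma balanced_eval1 : balanced br ract rho (fun f m => rho (f 1) m).
Proof.
move=> f g hf hg a m n y; split; [|split].
- by rewrite /fadd /fscale rho_linearl.
- by rewrite rho_linear.
- by rewrite ractE // /rmul_fun rhoM.
Qed.

Definition eval1 : X -> M := sval (tensor_lift balanced_eval1).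

Lemma eval1_linear : klinear eval1.
Proof. exact: (proj1 (proj2_sig (tensor_lift balanced_eval1))). Qed.

Lemma eval1_tp f m : in_Hbar br f -> eval1 (tp f m) = rho (f 1) m.
Proof. exact: (proj2 (proj2_sig (tensor_lift balanced_eval1))). Qed.

Lemma eval1_gen h m : eval1 (gen h m) = rho (br h) m.
Proof. by rewrite eval1_tp ?hact_phi1 //; apply: in_Hbar_hact_phi. Qed.

Hypothesis br1 : br 1 = 1.

Lemma eval1_theta m : eval1 (theta m) = m.
Proof. by rewrite -gen1 eval1_gen br1 rho1. Qed.

Lemma theta_inj : injective theta.
Proof. exact: can_inj eval1_theta. Qed.

Lemma secondary_structure_exists : exists (actX : H -> X -> X) (T : X -> X),
  (forall h, klinear (actX h)) /\
  (forall h f m, in_Hbar br f -> actX h (tp f m) = tp (hact h f) m) /\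
  klinear T /\
  (forall f m, in_Hbar br f -> T (tp f m) = tp (phi br 1) (rho (f 1) m)).
Proof.
pose lift h := tensor_lift (balanced_hact h).
exists (fun h => sval (lift h)), (fun x => theta (eval1 x)).
do !split.
- by move=> h; case: (proj2_sig (lift h)).
- by move=> h; case: (proj2_sig (lift h)).
- exact: klinear_comp theta_linear eval1_linear.
- by move=> f m hf; rewrite /theta eval1_tp.
Qed.

Section Dilation.
Variables (cop : H -> seq (H * H)) (S : H -> H) (pi : H -> M -> M).
Hypothesis br_rel : par_rel cop S br.
Hypothesis rho_br : forall h m, rho (br h) m = pi h m.
Variables (actX : H -> X -> X) (T : X -> X).
Hypothesis actX_linear : forall h, klinear (actX h).
Hypothesis actX_tp : forall h f m, in_Hbar br f -> actX h (tp f m) = tp (hact h f) m.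
Hypothesis T_linear : klinear T.
Hypothesis T_tp : forall f m, in_Hbar br f -> T (tp f m) = tp (phi br 1) (rho (f 1) m).

Lemma actX_gen u h m : actX u (gen h m) = gen (u * h) m.
Proof. by rewrite /gen actX_tp ?hactM //; apply: in_Hbar_hact_phi. Qed.

Lemma T_gen h m : T (gen h m) = theta (rho (br h) m).
Proof. by rewrite /gen T_tp ?hact_phi1 //; apply: in_Hbar_hact_phi. Qed.

Lemma T_eval1 : T =1 fun x => theta (eval1 x).
Proof.
apply: klinear_eq_on_gen => // [|h m]; first exact: klinear_comp theta_linear eval1_linear.
by rewrite T_gen eval1_gen.
Qed.

Lemma T_theta m : T (theta m) = theta m.
Proof. by rewrite T_eval1 eval1_theta. Qed.

Lemma actX_module : is_Hmodule actX.
Proof.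
have br_linear : forall (a : k) u v, br (a *: u + v) = a *: br u + br v by case: br_rel.
do !split => //.
- move=> a u v; apply: klinear_eq_on_gen => [||h m] //; first exact: klinear_scaleD.
  rewrite !actX_gen mulrDl -scalerAl /gen (hact_scaleDl br_linear) ?tp_scaleDl //.
  + exact: in_Hbar_hact_phi.
  + exact: in_Hbar_hact_phi.
  + exact: in_Hbar_phi.
- by apply: klinear_eq_on_gen => // h m; rewrite actX_gen mul1r.
- move=> h l; apply: klinear_eq_on_gen => [||h' m] //; first exact: klinear_comp.
  by rewrite !actX_gen mulrA.
Qed.

Lemma T_projection : is_projection T.
Proof.
split=> // x; apply: (klinear_eq_on_gen (F := fun x => T (T x))) => // [|h m].
  exact: klinear_comp.
by rewrite T_gen T_theta.
Qed.

Lemma Tpart_gen h h0 m :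
  Tpart cop S actX T h (gen h0 m) = \sum_(q <- cop h) gen q.1 (rho (br (S q.2 * h0)) m).
Proof.
by apply: eq_bigr => q _; rewrite actX_gen T_gen -gen1 actX_gen mulr1.
Qed.

Lemma hbar_of_cop_S h y :
  hbar_of br [seq (q.1, br (S q.2) * y) | q <- cop h]
  = phi br (\sum_(q <- cop h) br q.1 * br (S q.2) * y).
Proof.
apply: functional_extensionality => l.
rewrite /hbar_of big_map /phi mulr_sumr.
have [_ [_ [rel2 _]]] := br_rel.
transitivity ((\sum_(q <- cop h) br (l * q.1) * br (S q.2)) * y).
  by rewrite mulr_suml; apply: eq_bigr => q _; rewrite /hact /phi /= mulrA.
by rewrite -rel2 mulr_suml; apply: eq_bigr => q _; rewrite !mulrA.
Qed.

Lemma T_c_condition : c_condition cop S actX T.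
Proof.
have Tpart_linear h : klinear (Tpart cop S actX T h).
  apply: (@klinear_sumf _ _ _ _ (cop h) (fun q x => actX q.1 (T (actX (S q.2) x)))) => q.
  by do 2!apply: klinear_comp => //.
move=> h; apply: klinear_eq_on_gen => [||h0 m]; try exact: klinear_comp.
pose Y := \sum_(q <- cop h) br q.1 * br (S q.2) * br h0.
have -> : Tpart cop S actX T h (T (gen h0 m)) = theta (rho Y m).
  rewrite T_gen -gen1 Tpart_gen.
  under eq_bigr => q _ do rewrite mulr1 -rhoM.
  have := tp_hbar_of [seq (q.1, br (S q.2) * br h0) | q <- cop h] m.
  by rewrite big_map hbar_of_cop_S => <-; rewrite -[phi br _]hact1 tp_hact_phi gen1.
rewrite Tpart_gen klinear_sum //.
under eq_bigr => q _ do rewrite T_gen -rhoM.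
have [_ [_ [_ [rel3 _]]]] := br_rel.
by rewrite /Y rel3 (klinear_sum _ _ (rho_linearl m)) (klinear_sum _ _ theta_linear).
Qed.

Lemma theta_dilation : is_dilation cop S pi actX T theta.
Proof.
split; first exact: actX_module.
split; first exact: T_projection.
split; first exact: T_c_condition.
split; first exact: theta_linear.
split; first exact: theta_inj.
split; first exact: T_theta.
split; first by move=> x Tx; exists (eval1 x); rewrite -T_eval1.
by move=> h m; rewrite -[theta m]gen1 actX_gen mulr1 T_gen rho_br.
Qed.

Lemma actX_proper : is_proper actX T.
Proof.
move=> x; have [r ->] := gen_span x; exists [seq (p.1, theta p.2) | p <- r].
by rewrite big_map; apply: eq_bigr => p _; rewrite /= T_theta -gen1 actX_gen mulr1.
Qed.

End Dilation.
End Tensor.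

Unset Implicit Arguments. Set Strict Implicit.

Theorem mainTheorem13 (k : fieldType) (H : algType k)
    (cop : H -> seq (H * H)) (eps : H -> k) (S : H -> H)
    (A : algType k) (br : H -> A) :
  is_hopf cop eps S ->
  is_Hpar cop S br ->
  (* (i) *)
  (exists ract : (H -> A) -> A -> (H -> A),
      ract_formula br ract /\ is_bimodule br ract) /\
  (* (ii) *)
  (forall (M : lmodType k) (pi : H -> M -> M) (rho : A -> M -> M),
    is_partial_module cop S pi ->
    is_Amodule rho ->
    (forall (h : H) (m : M), rho (br h) m = pi h m) ->
    forall ract : (H -> A) -> A -> (H -> A),
    ract_formula br ract ->
    forall (X : lmodType k) (tp : (H -> A) -> M -> X),
    is_tensor br ract rho tp ->
    (exists (actX : H -> X -> X) (T : X -> X),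
        (forall h, klinear (actX h)) /\
        (forall h f m, in_Hbar br f -> actX h (tp f m) = tp (hact h f) m) /\
        klinear T /\
        (forall f m, in_Hbar br f -> T (tp f m) = tp (phi br 1) (rho (f 1) m))) /\
    (forall (actX : H -> X -> X) (T : X -> X),
        (forall h, klinear (actX h)) ->
        (forall h f m, in_Hbar br f -> actX h (tp f m) = tp (hact h f) m) ->
        klinear T ->
        (forall f m, in_Hbar br f -> T (tp f m) = tp (phi br 1) (rho (f 1) m)) ->
        is_dilation cop S pi actX T (fun m => tp (phi br 1) m) /\
        is_proper actX T)).
Proof.
move=> _ [br_rel _].
have br_linear : forall (a : k) u v, br (a *: u + v) = a *: br u + br v by case: br_rel.
have br1 : br 1 = 1 by case: br_rel => _ [].
split.
  by exists (@rmul_fun k H A); split; [exact: rmul_formula | exact: rmul_bimodule br_linear].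
move=> M pi rho _ rho_module rho_br ract ract_rmul X tp tp_tensor; split.
  exact: secondary_structure_exists.
move=> actX T actX_linear actX_tp T_linear T_tp; split.
- exact: (theta_dilation rho_module ract_rmul tp_tensor br1 br_rel rho_br
    actX_linear actX_tp T_linear T_tp).
- exact: (actX_proper rho_module ract_rmul tp_tensor br1 actX_tp T_linear T_tp).
Qed.
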